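(* Let $\varphi:\mathbb{R}^n\to\mathbb{R}$ be continuously differentiable around $\bar x$ with $\nabla\varphi(\bar x)=0$, where $\nabla\varphi$ is locally Lipschitzian around $\bar x$ with modulus $\ell>0$ and semismooth$^*$ at $\bar x$. Let $x^k\to\bar x$ with $x^k\neq\bar x$ for all $k$, and let $\{d^k\}$ satisfy $\|x^k+d^k-\bar x\|=o(\|x^k-\bar x\|)$. Consider: (i) $\nabla\varphi$ is directionally differentiable at $\bar x$ and there is $\kappa>0$ with $\langle\nabla\varphi(x^k),d^k\rangle\le-\frac1\kappa\|d^k\|^2$ for all sufficiently large $k$; (ii) there is $\kappa>0$ with $\varphi(x^k+d^k)-\varphi(x^k)\le\langle\nabla\varphi(x^k+d^k),d^k\rangle-\frac1{2\kappa}\|d^k\|^2$ for all sufficiently large $k$. Then $\varphi(x^k+d^k)\le\varphi(x^k)+\sigma\langle\nabla\varphi(x^k),d^k\rangle$ for all sufficiently large $k$, provided that either (i) holds and $\sigma\in(0,\tfrac12)$, or (ii) holds and $\sigma\in(0,1/(2\ell\kappa))$.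
   Context: Regular normal cone: $\widehat N_\Omega(\bar z):=\{v\mid \limsup_{z\to\bar z,\,z\in\Omega}\langle v,z-\bar z\rangle/\|z-\bar z\|\le 0\}$. Directional limiting normal cone: $N_\Omega(\bar z;d):=\{v\mid\exists t_k\downarrow0,\ d_k\to d,\ v_k\to v \text{ with } v_k\in\widehat N_\Omega(\bar z+t_kd_k)\}$. Directional coderivative of $F:\mathbb{R}^n\rightrightarrows\mathbb{R}^m$: $D^*F((\bar x,\bar y);(u,v))(v^* ):=\{u^*\mid(u^*,-v^* )\in N_{\operatorname{gph}F}((\bar x,\bar y);(u,v))\}$. $F$ is semismooth$^*$ at $(\bar x,\bar y)\in\operatorname{gph}F$ if for all $(u,v)\in\mathbb{R}^n\times\mathbb{R}^m$, $\langle u^*,u\rangle=\langle v^*,v\rangle$ whenever $u^*\in D^*F((\bar x,\bar y);(u,v))(v^* )$. ''$\nabla\varphi$ semismooth$^*$ at $\bar x$'' means at $(\bar x,\nabla\varphi(\bar x))$. *)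

(* R : realType, R^n rendered as row vectors 'rV[R]_n with the
   Euclidean inner product and norm defined below. *)
From HB Require Import structures.
From mathcomp Require Import all_boot all_order all_algebra.
From mathcomp Require Import reals.
Set Implicit Arguments. Unset Strict Implicit. Unset Printing Implicit Defensive.
Import Order.TTheory GRing.Theory Num.Theory.
Local Open Scope ring_scope.

Definition dotv {R : realType} {n : nat} (u v : 'rV[R]_n) : R :=
  \sum_(i < n) u 0 i * v 0 i.
Definition normv {R : realType} {n : nat} (u : 'rV[R]_n) : R :=
  Num.sqrt (dotv u u).

Definition pdot {R : realType} {n m : nat} (z w : 'rV[R]_n * 'rV[R]_m) : R :=
  dotv z.1 w.1 + dotv z.2 w.2.
Definition psub {R : realType} {n m : nat} (z w : 'rV[R]_n * 'rV[R]_m)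
  : 'rV[R]_n * 'rV[R]_m := (z.1 - w.1, z.2 - w.2).
Definition pnorm {R : realType} {n m : nat} (z : 'rV[R]_n * 'rV[R]_m) : R :=
  Num.sqrt (pdot z z).

(* Regular (Fréchet) normal cone: v ∈ N̂_Ω(z̄) iff z̄ ∈ Ω and
   limsup_{z -> z̄, z ∈ Ω} <v, z - z̄>/||z - z̄|| <= 0 (empty if z̄ ∉ Ω). *)
Definition regular_normal {R : realType} {n m : nat}
  (Om : 'rV[R]_n * 'rV[R]_m -> Prop) (zb v : 'rV[R]_n * 'rV[R]_m) : Prop :=
  Om zb /\
  forall eps : R, 0 < eps -> exists delta : R, 0 < delta /\
    forall z, Om z -> pnorm (psub z zb) < delta ->
      pdot v (psub z zb) <= eps * pnorm (psub z zb).

Definition rseq_cvg0 {R : realType} (t : nat -> R) : Prop :=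
  forall eps : R, 0 < eps -> exists N, forall k, (N <= k)%N -> `|t k| < eps.
Definition pseq_cvg {R : realType} {n m : nat}
  (s : nat -> 'rV[R]_n * 'rV[R]_m) (l : 'rV[R]_n * 'rV[R]_m) : Prop :=
  forall eps : R, 0 < eps -> exists N, forall k, (N <= k)%N ->
    pnorm (psub (s k) l) < eps.
Definition vseq_cvg {R : realType} {n : nat} (s : nat -> 'rV[R]_n) (l : 'rV[R]_n)
  : Prop :=
  forall eps : R, 0 < eps -> exists N, forall k, (N <= k)%N -> normv (s k - l) < eps.

Definition dir_normal {R : realType} {n m : nat}
  (Om : 'rV[R]_n * 'rV[R]_m -> Prop) (zb d v : 'rV[R]_n * 'rV[R]_m) : Prop :=
  exists (t : nat -> R) (dk vk : nat -> 'rV[R]_n * 'rV[R]_m),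
    (forall k, 0 < t k) /\ rseq_cvg0 t /\ pseq_cvg dk d /\ pseq_cvg vk v /\
    forall k, regular_normal Om (zb.1 + t k *: (dk k).1, zb.2 + t k *: (dk k).2)
                             (vk k).

Definition graph {R : realType} {n m : nat} (F : 'rV[R]_n -> 'rV[R]_m)
  : 'rV[R]_n * 'rV[R]_m -> Prop := fun z => z.2 = F z.1.

Definition dir_coderiv {R : realType} {n m : nat} (F : 'rV[R]_n -> 'rV[R]_m)
  (xb : 'rV[R]_n) (yb : 'rV[R]_m) (u : 'rV[R]_n) (v : 'rV[R]_m)
  (vstar : 'rV[R]_m) (ustar : 'rV[R]_n) : Prop :=
  dir_normal (graph F) (xb, yb) (u, v) (ustar, - vstar).

Definition semismooth_star {R : realType} {n m : nat} (F : 'rV[R]_n -> 'rV[R]_m)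
  (xb : 'rV[R]_n) (yb : 'rV[R]_m) : Prop :=
  graph F (xb, yb) /\
  forall (u : 'rV[R]_n) (v : 'rV[R]_m) (ustar : 'rV[R]_n) (vstar : 'rV[R]_m),
    dir_coderiv F xb yb u v vstar ustar -> dotv ustar u = dotv vstar v.

Definition has_gradient {R : realType} {n : nat} (phi : 'rV[R]_n -> R)
  (x g : 'rV[R]_n) : Prop :=
  forall eps : R, 0 < eps -> exists delta : R, 0 < delta /\
    forall y, normv (y - x) < delta ->
      `|phi y - phi x - dotv g (y - x)| <= eps * normv (y - x).

Definition continuous_at_v {R : realType} {n m : nat} (G : 'rV[R]_n -> 'rV[R]_m)
  (x : 'rV[R]_n) : Prop :=
  forall eps : R, 0 < eps -> exists delta : R, 0 < delta /\
    forall y, normv (y - x) < delta -> normv (G y - G x) < eps.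

Definition C1_around {R : realType} {n : nat} (phi : 'rV[R]_n -> R)
  (G : 'rV[R]_n -> 'rV[R]_n) (xb : 'rV[R]_n) : Prop :=
  exists r : R, 0 < r /\ forall x, normv (x - xb) < r ->
    has_gradient phi x (G x) /\ continuous_at_v G x.

Definition loc_lipschitz {R : realType} {n m : nat} (G : 'rV[R]_n -> 'rV[R]_m)
  (xb : 'rV[R]_n) (l : R) : Prop :=
  exists r : R, 0 < r /\ forall x y, normv (x - xb) < r -> normv (y - xb) < r ->
    normv (G x - G y) <= l * normv (x - y).

Definition dir_differentiable {R : realType} {n m : nat}
  (G : 'rV[R]_n -> 'rV[R]_m) (xb : 'rV[R]_n) : Prop :=
  forall h : 'rV[R]_n, exists w : 'rV[R]_m, forall eps : R, 0 < eps ->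
    exists delta : R, 0 < delta /\ forall t : R, 0 < t -> t < delta ->
      normv (t^-1 *: (G (xb + t *: h) - G xb) - w) <= eps.

Definition eventually_nat (P : nat -> Prop) : Prop :=
  exists N, forall k, (N <= k)%N -> P k.

(* Write e = x - xb and q = x + d - xb, so that |q| = o(|e|) and |d| is
   comparable to |e|.  In case (ii) the Lipschitz bounds |G x| <= l |e| and
   |G (x + d)| <= l |q| make every term except -|d|^2 / (2 kappa) of order at
   most l |d| (|q| + sigma |e|), and sigma < 1 / (2 l kappa) is exactly what lets
   the quadratic term win.  In case (i), directional differentiability and the
   Lipschitz property make G almost positively homogeneous along rays from xb
   (by compactness of the set of directions), so the trapezoid rule gives
   phi x = phi xb + <G x, e> / 2 + o(|e|^2), while phi (x + d) = phi xb + o(|e|^2).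
   As <G x, d> = <G x, q - e> and the descent condition makes -<G x, d> of exact
   order |e|^2, the Armijo inequality follows for every sigma < 1/2. *)

From HB Require Import structures.
From mathcomp Require Import all_boot all_order all_algebra.
From mathcomp Require Import reals.
From mathcomp Require Import boolp classical_sets functions topology normedtype derive.
From mathcomp Require Import ring lra.
Set Implicit Arguments. Unset Strict Implicit. Unset Printing Implicit Defensive.
Import Order.TTheory GRing.Theory Num.Theory.
Import numFieldNormedType.Exports.
Local Open Scope classical_set_scope.
Local Open Scope ring_scope.

Section Euclidean.
Variables (R : realType) (n : nat).
Implicit Types (u v w : 'rV[R]_n) (c : R).

Lemma dotvC u v : dotv u v = dotv v u.
Proof. by apply: eq_bigr => i _; rewrite mulrC. Qed.

Lemma dotvDr u v w : dotv u (v + w) = dotv u v + dotv u w.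
Proof. by rewrite /dotv -big_split; apply: eq_bigr => i _; rewrite mxE mulrDr. Qed.

Lemma dotvZr u c v : dotv u (c *: v) = c * dotv u v.
Proof. by rewrite /dotv mulr_sumr; apply: eq_bigr => i _; rewrite mxE mulrCA. Qed.

Lemma dotvNr u v : dotv u (- v) = - dotv u v.
Proof. by rewrite -scaleN1r dotvZr mulN1r. Qed.

Lemma dotvBr u v w : dotv u (v - w) = dotv u v - dotv u w.
Proof. by rewrite dotvDr dotvNr. Qed.

Lemma dotvDl u v w : dotv (v + w) u = dotv v u + dotv w u.
Proof. by rewrite dotvC dotvDr !(dotvC u). Qed.

Lemma dotvZl u c v : dotv (c *: v) u = c * dotv v u.
Proof. by rewrite dotvC dotvZr dotvC. Qed.

Lemma dotvBl u v w : dotv (v - w) u = dotv v u - dotv w u.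
Proof. by rewrite !(dotvC _ u) dotvBr. Qed.

Lemma dotv0r u : dotv u 0 = 0.
Proof. by rewrite -(scale0r 0) dotvZr mul0r. Qed.

Lemma dotv0l u : dotv 0 u = 0.
Proof. by rewrite dotvC dotv0r. Qed.

Lemma dotvv_ge0 v : 0 <= dotv v v.
Proof. by apply: sumr_ge0 => i _; rewrite -expr2 sqr_ge0. Qed.

Lemma dotvv_eq0 v : dotv v v = 0 -> v = 0.
Proof.
move=> /eqP; rewrite psumr_eq0 => [/allP v0|i _]; last by rewrite -expr2 sqr_ge0.
apply/rowP => i; rewrite mxE.
by have := v0 i (mem_index_enum i); rewrite /= mulf_eq0 orbb => /eqP.
Qed.

Lemma normv_ge0 v : 0 <= normv v.
Proof. exact: sqrtr_ge0. Qed.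

Lemma normv_sqr v : normv v ^+ 2 = dotv v v.
Proof. by rewrite sqr_sqrtr // dotvv_ge0. Qed.

Lemma normvZ c v : normv (c *: v) = `|c| * normv v.
Proof.
by rewrite /normv dotvZl dotvZr mulrA -expr2 sqrtrM ?sqr_ge0 // sqrtr_sqr.
Qed.

Lemma normvN v : normv (- v) = normv v.
Proof. by rewrite -scaleN1r normvZ normrN1 mul1r. Qed.

Lemma normv0 : normv (0 : 'rV[R]_n) = 0.
Proof. by rewrite /normv dotv0r sqrtr0. Qed.

Lemma normv_eq0 v : normv v = 0 -> v = 0.
Proof. by move=> v0; apply: dotvv_eq0; rewrite -normv_sqr v0 expr0n. Qed.

Lemma dotv_sqr_le u v : dotv u v ^+ 2 <= dotv u u * dotv v v.
Proof.
have [v0|vn0] := eqVneq (dotv v v) 0.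
  by rewrite (dotvv_eq0 v0) !dotv0r expr0n /= mulr0.
have vp : 0 < dotv v v by rewrite lt_neqAle eq_sym vn0 dotvv_ge0.
have := dotvv_ge0 (dotv v v *: u - dotv u v *: v).
rewrite !(dotvBl, dotvBr, dotvZl, dotvZr) (dotvC v u) => expand_ge0.
have : 0 <= dotv v v * (dotv u u * dotv v v - dotv u v ^+ 2).
  by move: expand_ge0; congr (_ <= _); ring.
by rewrite pmulr_rge0 // subr_ge0.
Qed.

Lemma normr_dotv_le u v : `|dotv u v| <= normv u * normv v.
Proof.
rewrite -ler_sqr ?nnegrE ?mulr_ge0 ?normv_ge0 //.
by rewrite real_normK ?num_real // exprMn !normv_sqr dotv_sqr_le.
Qed.

Lemma dotv_le u v : dotv u v <= normv u * normv v.
Proof. exact: le_trans (ler_norm _) (normr_dotv_le u v). Qed.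

Lemma normvD u v : normv (u + v) <= normv u + normv v.
Proof.
rewrite -ler_sqr ?nnegrE ?addr_ge0 ?normv_ge0 //.
rewrite normv_sqr !(dotvDl, dotvDr) sqrrD !normv_sqr (dotvC v u).
have := dotv_le u v; lra.
Qed.

Lemma normvB u v : normv (u - v) <= normv u + normv v.
Proof. by rewrite -(normvN v) normvD. Qed.

Lemma normr_coord_le v i : `|v 0 i| <= normv v.
Proof.
rewrite -sqrtr_sqr /normv ler_sqrt // ?dotvv_ge0 // /dotv (bigD1 i) //= -expr2.
by rewrite lerDl sumr_ge0 // => j _; rewrite -expr2 sqr_ge0.
Qed.

Lemma normv_lt_coord v eta : 0 < eta ->
  (forall i, `|v 0 i| < eta / (n%:R + 1)) -> normv v < eta.
Proof.
move=> eta0 v_small; rewrite -ltr_sqr ?nnegrE ?normv_ge0 ?ltW // normv_sqr.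
set c := eta / (n%:R + 1).
have n1_gt0 : 0 < n%:R + 1 :> R by rewrite ltr_wpDl.
have c_gt0 : 0 < c by rewrite divr_gt0.
apply: (@le_lt_trans _ _ (\sum_(i < n) c ^+ 2)).
  apply: ler_sum => i _; rewrite -expr2 -real_normK ?num_real //.
  by rewrite ler_sqr ?nnegrE ?normr_ge0 ?ltW // ltW // v_small.
have -> : eta = c * (n%:R + 1) by rewrite /c divfK ?gt_eqF.
rewrite sumr_const card_ord -mulr_natr.
have : 0 <= n%:R :> R by [].
nra.
Qed.

End Euclidean.

Section RealLine.
Variable R : realType.
Implicit Types (psi D : R -> R) (al be : R).

Lemma is_derive01_ge0_le psi D :
  (forall t : R, 0 <= t <= 1 -> is_derive t 1 psi (D t)) ->
  (forall t, 0 <= t <= 1 -> 0 <= D t) -> psi 0 <= psi 1.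
Proof.
move=> dpsi D_ge0.
have in01 (t : R) : t \in `]0, 1[ -> 0 <= t <= 1.
  by rewrite in_itv /= => /andP[t0 t1]; rewrite !ltW.
apply: (@ger0_derive1_ndecr _ psi 0 1) => //.
- by move=> t /in01 /dpsi dt; exact: ex_derive.
- by move=> t /in01 t01; have dt := dpsi t t01; rewrite derive1E derive_val D_ge0.
- apply: derivable_within_continuous => t; rewrite in_itv /= => /dpsi dt.
  exact: ex_derive.
Qed.

Lemma is_derive01_affine_lb psi D al be :
  (forall t : R, 0 <= t <= 1 -> is_derive t 1 psi (D t)) ->
  (forall t, 0 <= t <= 1 -> al * t + be <= D t) ->
  psi 0 + al / 2 + be <= psi 1.
Proof.
move=> dpsi D_ge.
pose chi := psi - (fun s => al / 2 * s ^+ 2 + be * s).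
suff : chi 0 <= chi 1 by rewrite /chi !fctE /= !expr2 !mulr0 !mulr1; lra.
apply: (@is_derive01_ge0_le chi (fun t => D t - (al * t + be))).
- move=> t t01; have dt := dpsi t t01.
  by apply: is_derive_eq; rewrite /GRing.scale /= !mulr1; field.
- by move=> t /D_ge; rewrite subr_ge0.
Qed.

Lemma is_derive01_affine_ub psi D al be :
  (forall t : R, 0 <= t <= 1 -> is_derive t 1 psi (D t)) ->
  (forall t, 0 <= t <= 1 -> D t <= al * t + be) ->
  psi 1 <= psi 0 + al / 2 + be.
Proof.
move=> dpsi D_le.
have := @is_derive01_affine_lb (- psi) (fun t => - D t) (- al) (- be).
have dNpsi (t : R) : 0 <= t <= 1 -> is_derive t 1 (- psi) (- D t).
  by move=> /dpsi dt; exact: is_deriveN.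
have NDge (t : R) : 0 <= t <= 1 -> - al * t + - be <= - D t by move=> /D_le; lra.
by move=> /(_ dNpsi NDge); rewrite !fctE; lra.
Qed.

End RealLine.

Lemma bounded_rV_cluster (R : realType) n (u : nat -> 'rV[R]_n) (P : nat -> Prop) :
  (forall k, normv (u k) <= 1) -> (forall N, exists k, (N <= k)%N /\ P k) ->
  exists h : 'rV[R]_n, forall eta, 0 < eta -> forall N,
    exists k, [/\ (N <= k)%N, P k & normv (u k - h) < eta].
Proof.
move=> u_le1 often.
have [f /all_and2 [f_ge f_P]] := choice often.
have cube_compact := @rV_compact R n (fun _ => `[-1, 1]%classic)
  (fun _ => @segment_compact R _ _).
have near_cube : ((u \o f) @ \oo) [set v : 'rV[R]_n | forall i, `[-1, 1]%classic (v 0 i)].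
  exists 0%N => // j _ i; rewrite /= in_itv /= -ler_norml.
  exact: le_trans (normr_coord_le _ _) (u_le1 _).
have [h [_ h_cluster]] := cube_compact _ _ near_cube.
exists h => eta eta0 N.
have n1_gt0 : 0 < n%:R + 1 :> R by rewrite ltr_wpDl.
have tail_N : ((u \o f) @ \oo) ((u \o f) @` [set j | (N <= j)%N]).
  by exists N => // j jN; exists j.
have [_ [[j /= jN <-] [_ /= near_h]]] := h_cluster _ _ tail_N
  (nbhsx_ballx _ _ (divr_gt0 eta0 n1_gt0)).
exists (f j); split; [exact: leq_trans jN (f_ge j) | exact: f_P |].
apply: normv_lt_coord => // i; rewrite !mxE distrC; exact: near_h.
Qed.

Lemma eventually_natI (P Q : nat -> Prop) :
  eventually_nat P -> eventually_nat Q -> eventually_nat (fun k => P k /\ Q k).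
Proof.
move=> [N1 PN] [N2 QN]; exists (maxn N1 N2) => k.
by rewrite geq_max => /andP[k1 k2]; split; [exact: PN | exact: QN].
Qed.

Lemma not_eventually_nat (P : nat -> Prop) :
  ~ eventually_nat P -> forall N, exists k, (N <= k)%N /\ ~ P k.
Proof.
move=> notP N; apply: contrapT => /forallNP never; apply: notP; exists N => k kN.
by apply: contrapT => notPk; apply: (never k); split.
Qed.

Lemma normv_segment_le (R : realType) n (y v : 'rV[R]_n) t :
  0 <= t <= 1 -> normv (y + t *: v - y) <= normv v.
Proof.
by move=> /andP[t0 t1]; rewrite addrC addKr normvZ ger0_norm // ler_piMl ?normv_ge0.
Qed.

Section GradientAlongSegment.
Variables (R : realType) (n : nat) (phi : 'rV[R]_n -> R) (G : 'rV[R]_n -> 'rV[R]_n).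

Lemma is_derive_gradient_line y v t g :
  has_gradient phi (y + t *: v) g ->
  is_derive t 1 (fun s : R => phi (y + s *: v)) (dotv g v).
Proof.
move=> grad.
have nv1_gt0 : 0 < normv v + 1 by rewrite ltr_wpDl ?normv_ge0.
have lim : (fun h : R => h^-1 *: ((fun s => phi (y + s *: v)) (h *: 1 + t)
    - phi (y + t *: v))) @ 0^' --> dotv g v.
  apply/cvgrPdist_le => e e0.
  have [del [del0 grad_del]] := grad (e / (normv v + 1)) (divr_gt0 e0 nv1_gt0).
  near=> h.
  have h0 : h != 0 by near: h; exact: nbhs_dnbhs_neq.
  have h_small : `|h| < del / (normv v + 1).
    by near: h; apply: dnbhs0_lt; rewrite divr_gt0.
  have step : y + (h + t) *: v - (y + t *: v) = h *: v.
    by rewrite scalerDl addrCA addrK.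
  have hv_small : normv (y + (h + t) *: v - (y + t *: v)) < del.
    rewrite step normvZ; move: h_small; rewrite ltr_pdivlMr //.
    by apply: le_lt_trans; rewrite ler_wpM2l ?lerDl.
  have := grad_del _ hv_small; rewrite step dotvZr normvZ [h%:A]mulr1.
  set P := phi _ - phi _ => P_approx.
  have -> : dotv g v - h^-1 *: P = h^-1 * - (P - h * dotv g v).
    by rewrite /GRing.scale /=; field.
  rewrite normrM normrN normrV ?unitfE // ler_pdivrMl ?normr_gt0 //.
  apply: le_trans P_approx _.
  set c := e / (normv v + 1).
  have -> : e = c * (normv v + 1) by rewrite /c divfK ?gt_eqF.
  have := normv_ge0 v; have := normr_ge0 h; have : 0 <= c by rewrite divr_ge0 ?ltW.
  nra.
by split; [exact: cvgP lim | exact: cvg_lim lim].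
Unshelve. all: by end_near.
Qed.

Variables (y v : 'rV[R]_n).
Hypothesis grad_seg : forall t, 0 <= t <= 1 ->
  has_gradient phi (y + t *: v) (G (y + t *: v)).

Lemma segment_increment_lb al be :
  (forall t, 0 <= t <= 1 -> al * t + be <= dotv (G (y + t *: v)) v) ->
  phi y + al / 2 + be <= phi (y + v).
Proof.
move=> slope_ge.
have := @is_derive01_affine_lb R (fun s => phi (y + s *: v))
  (fun t => dotv (G (y + t *: v)) v) al be.
rewrite scale0r addr0 scale1r; apply=> // t t01.
exact/is_derive_gradient_line/grad_seg.
Qed.

Lemma segment_increment_ub al be :
  (forall t, 0 <= t <= 1 -> dotv (G (y + t *: v)) v <= al * t + be) ->
  phi (y + v) <= phi y + al / 2 + be.
Proof.
move=> slope_le.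
have := @is_derive01_affine_ub R (fun s => phi (y + s *: v))
  (fun t => dotv (G (y + t *: v)) v) al be.
rewrite scale0r addr0 scale1r; apply=> // t t01.
exact/is_derive_gradient_line/grad_seg.
Qed.

Lemma trapezoid_lb c :
  (forall t, 0 <= t <= 1 ->
     normv (G (y + t *: v) - G y - t *: (G (y + v) - G y)) <= c) ->
  phi y + (dotv (G y) v + dotv (G (y + v)) v) / 2 - c * normv v <= phi (y + v).
Proof.
move=> interp.
apply: le_trans
  (segment_increment_lb (al := dotv (G (y + v) - G y) v)
                        (be := dotv (G y) v - c * normv v) _).
  by rewrite dotvBl; lra.
move=> t /interp interp_t.
have := normr_dotv_le (G (y + t *: v) - G y - t *: (G (y + v) - G y)) v.
have := ler_wpM2r (normv_ge0 v) interp_t.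
rewrite !dotvBl dotvZl dotvBl ler_norml; nra.
Qed.

Lemma lipschitz_segment_ub l :
  (forall t, 0 <= t <= 1 -> normv (G (y + t *: v)) <= l * (t * normv v)) ->
  phi (y + v) <= phi y + l * normv v ^+ 2 / 2.
Proof.
move=> G_le.
have := @segment_increment_ub (l * normv v ^+ 2) 0.
rewrite !addr0; apply=> t t01.
apply: le_trans (dotv_le _ _) _.
have := ler_wpM2r (normv_ge0 v) (G_le t t01).
by congr (_ <= _); rewrite expr2; ring.
Qed.

End GradientAlongSegment.

Section RayApproximation.
Variables (R : realType) (n m : nat) (G : 'rV[R]_n -> 'rV[R]_m) (xb : 'rV[R]_n).
Variables (l r : R).
Hypothesis l_ge0 : 0 <= l.
Hypothesis lipG : forall y z, normv (y - xb) < r -> normv (z - xb) < r ->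
  normv (G y - G z) <= l * normv (y - z).
Variables (h : 'rV[R]_n) (w : 'rV[R]_m) (eps delta : R).
Hypothesis dir_h : forall s, 0 < s -> s < delta ->
  normv (s^-1 *: (G (xb + s *: h) - G xb) - w) <= eps.
Hypothesis h_le2 : normv h <= 2.
Variables (e : 'rV[R]_n) (eta : R).
Hypotheses (e_gt0 : 0 < normv e) (e_lt_delta : normv e < delta).
Hypothesis e_lt_r : 2 * normv e < r.
Hypothesis e_near_h : normv ((normv e)^-1 *: e - h) < eta.

Lemma ray_dir_approx t : 0 < t <= 1 ->
  normv (G (xb + t *: e) - G xb - (t * normv e) *: w) <= t * normv e * (l * eta + eps).
Proof.
move=> /andP[t_gt0 t_le1].
have a_gt0 := e_gt0; have a_lt_delta := e_lt_delta.
have a_lt_r := e_lt_r; have a_near_h := e_near_h.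
set a := normv e in a_gt0 a_lt_delta a_lt_r a_near_h *.
set s := t * a.
have s_gt0 : 0 < s by rewrite mulr_gt0.
have s_le_a : s <= a by rewrite ler_piMl // ltW.
have along_h : normv (G (xb + s *: h) - G xb - s *: w) <= s * eps.
  have -> : G (xb + s *: h) - G xb - s *: w = s *: (s^-1 *: (G (xb + s *: h) - G xb) - w).
    by rewrite scalerBr scalerA mulfV ?gt_eqF // scale1r.
  rewrite normvZ (ger0_norm (ltW s_gt0)) ler_pM2l //.
  exact: dir_h s_gt0 (le_lt_trans s_le_a a_lt_delta).
have off_h : xb + t *: e - (xb + s *: h) = s *: (a^-1 *: e - h).
  rewrite opprD addrACA subrr add0r scalerBr scalerA /s -mulrA mulfV ?gt_eqF //.
  by rewrite mulr1.
have lip_te_sh : normv (G (xb + t *: e) - G (xb + s *: h)) <= l * (s * eta).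
  apply: le_trans (lipG _ _) _.
  - apply: le_lt_trans (normv_segment_le _ _ _) _; first by rewrite (ltW t_gt0) t_le1.
    by rewrite -/a; lra.
  - rewrite addrC addKr normvZ (ger0_norm (ltW s_gt0)).
    apply: le_lt_trans a_lt_r; rewrite mulrC.
    exact: ler_pM (normv_ge0 h) (ltW s_gt0) h_le2 s_le_a.
  - rewrite off_h normvZ (ger0_norm (ltW s_gt0)).
    exact/(ler_wpM2l l_ge0)/(ler_wpM2l (ltW s_gt0))/ltW.
have -> : G (xb + t *: e) - G xb - s *: w =
    (G (xb + t *: e) - G (xb + s *: h)) + (G (xb + s *: h) - G xb - s *: w).
  by rewrite !addrA subrK.
apply: le_trans (normvD _ _) _.
rewrite -/s mulrDr; apply: lerD => //; by rewrite mulrCA.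
Qed.

Lemma ray_interpolation_le t : 0 <= t <= 1 ->
  normv (G (xb + t *: e) - G xb - t *: (G (xb + e) - G xb))
    <= 2 * normv e * (l * eta + eps).
Proof.
move=> /andP[t_ge0 t_le1].
have approx1 := ray_dir_approx (t := 1).
rewrite ltr01 lexx scale1r !mul1r in approx1.
have mu_ge0 : 0 <= l * eta + eps.
  by rewrite -(pmulr_rge0 _ e_gt0); apply: le_trans (approx1 isT); exact: normv_ge0.
have [->|t_neq0] := eqVneq t 0.
  by rewrite scale0r addr0 subrr scale0r subr0 normv0 mulr_ge0 ?mulr_ge0 ?normv_ge0.
have t_gt0 : 0 < t by rewrite lt_neqAle eq_sym t_neq0.
have approx_t := ray_dir_approx (t := t).
rewrite t_gt0 t_le1 in approx_t.
have -> : G (xb + t *: e) - G xb - t *: (G (xb + e) - G xb) =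
    (G (xb + t *: e) - G xb - (t * normv e) *: w)
    - t *: (G (xb + e) - G xb - normv e *: w).
  by rewrite [t *: (_ - normv e *: w)]scalerBr scalerA opprB addrA subrK.
apply: le_trans (normvB _ _) _.
rewrite normvZ ger0_norm //.
have := ler_wpM2l t_ge0 (approx1 isT).
have := approx_t isT.
have : t * normv e * (l * eta + eps) <= normv e * (l * eta + eps).
  by rewrite -mulrA ler_piMl // mulr_ge0 ?normv_ge0.
lra.
Qed.

End RayApproximation.

Lemma eventually_ray_interpolation (R : realType) n m (G : 'rV[R]_n -> 'rV[R]_m)
    xb l (x : nat -> 'rV[R]_n) :
  0 <= l -> loc_lipschitz G xb l -> dir_differentiable G xb -> vseq_cvg x xb ->
  forall eps, 0 < eps -> eventually_nat (fun k => forall t, 0 <= t <= 1 ->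
    normv (G (xb + t *: (x k - xb)) - G xb - t *: (G (x k) - G xb))
      <= eps * normv (x k - xb)).
Proof.
move=> l_ge0 [r [r_gt0 lipG]] dirG xcv eps eps_gt0.
apply: contrapT => /not_eventually_nat often_bad.
pose u k := (normv (x k - xb))^-1 *: (x k - xb).
have u_le1 k : normv (u k) <= 1.
  rewrite normvZ ger0_norm ?invr_ge0 ?normv_ge0 //.
  by have [->|a_neq0] := eqVneq (normv (x k - xb)) 0; [rewrite mulr0 | rewrite mulVf].
have [h h_cluster] := bounded_rV_cluster u_le1 often_bad.
have h_le2 : normv h <= 2.
  have [k [_ _ uk_h]] := h_cluster 1 ltr01 0%N.
  have := normvB (u k) (u k - h); rewrite opprB addrC subrK.
  by have := u_le1 k; lra.
have [w dir_h] := dirG h.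
have [delta [delta_gt0 dir_delta]] := dir_h (eps / 4) ltac:(by rewrite divr_gt0).
set eta := eps / (4 * (l + 1)).
have l1_gt0 : 0 < l + 1 by rewrite ltr_wpDl.
have eta_gt0 : 0 < eta by rewrite divr_gt0 // mulr_gt0.
have l_eta : l * eta <= eps / 4.
  have -> : l * eta = eps / 4 * (l / (l + 1)) by rewrite /eta; field; rewrite gt_eqF.
  by apply: ler_piMr; rewrite ?divr_ge0 ?(ltW eps_gt0) // ler_pdivrMr // mul1r lerDl.
have [N xN] := xcv (Num.min delta (r / 2)) ltac:(by rewrite lt_min delta_gt0 divr_gt0).
have [k [kN bad uk_h]] := h_cluster eta eta_gt0 N.
apply: bad => t t01.
have := xN k kN; rewrite lt_min => /andP[a_delta a_r].
have [a0|a_neq0] := eqVneq (normv (x k - xb)) 0.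
  have xk : x k = xb by apply/eqP; rewrite -subr_eq0; apply/eqP/normv_eq0.
  by rewrite a0 xk subrr scaler0 addr0 !subrr scaler0 subrr normv0 mulr0.
have a_gt0 : 0 < normv (x k - xb) by rewrite lt_neqAle eq_sym a_neq0 normv_ge0.
have two_a_r : 2 * normv (x k - xb) < r by lra.
have := ray_interpolation_le l_ge0 lipG dir_delta h_le2 a_gt0 a_delta two_a_r uk_h t01.
have -> : xb + (x k - xb) = x k by rewrite addrC subrK.
move/le_trans; apply.
have : l * eta + eps / 4 <= eps / 2 by lra.
nra.
Qed.

Lemma exists_small_pos (R : realType) (l g b : R) :
  0 < l -> 0 < g -> 0 < b -> exists eps, [/\ 0 < eps, eps <= b & l * eps <= g].
Proof.
move=> l_gt0 g_gt0 b_gt0; exists (Num.min b (g / l)); split.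
- by rewrite lt_min b_gt0 divr_gt0.
- by rewrite ge_min lexx.
- by rewrite -ler_pdivlMl // ge_min mulrC lexx orbT.
Qed.

Section ArmijoStep.
Variables (R : realType) (n : nat) (phi : 'rV[R]_n -> R) (G : 'rV[R]_n -> 'rV[R]_n).
Variables (xb : 'rV[R]_n) (l r : R).
Hypotheses (G_xb : G xb = 0) (l_ge0 : 0 <= l).
Hypothesis lipG : forall y z, normv (y - xb) < r -> normv (z - xb) < r ->
  normv (G y - G z) <= l * normv (y - z).
Hypothesis gradG : forall y, normv (y - xb) < r -> has_gradient phi y (G y).

Lemma normv_G_le y : normv (y - xb) < r -> normv (G y) <= l * normv (y - xb).
Proof.
move=> y_r; have xb_r : normv (xb - xb) < r.
  by rewrite subrr normv0; apply: le_lt_trans y_r; exact: normv_ge0.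
by have := lipG y_r xb_r; rewrite G_xb subr0.
Qed.

Lemma segment_in_ball y t : normv (y - xb) < r -> 0 <= t <= 1 ->
  normv (xb + t *: (y - xb) - xb) < r.
Proof. by move=> y_r t01; apply: le_lt_trans y_r; exact: normv_segment_le. Qed.

Lemma lipschitz_center_ub y : normv (y - xb) < r ->
  phi y <= phi xb + l * normv (y - xb) ^+ 2 / 2.
Proof.
move=> y_r; have xb_y : xb + (y - xb) = y by rewrite addrC subrK.
rewrite -{1}xb_y.
apply: (lipschitz_segment_ub (fun t t01 => gradG (segment_in_ball y_r t01))).
move=> t /[dup] t01 /andP[t_ge0 _].
apply: le_trans (normv_G_le (segment_in_ball y_r t01)) _.
by rewrite addrC addKr normvZ ger0_norm.
Qed.

Lemma trapezoid_center_lb y c : normv (y - xb) < r ->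
  (forall t, 0 <= t <= 1 -> normv (G (xb + t *: (y - xb)) - t *: G y) <= c) ->
  phi xb + dotv (G y) (y - xb) / 2 - c * normv (y - xb) <= phi y.
Proof.
move=> y_r ray; have xb_y : xb + (y - xb) = y by rewrite addrC subrK.
have := trapezoid_lb (fun t t01 => gradG (segment_in_ball y_r t01)) (c := c).
rewrite G_xb dotv0l add0r xb_y; apply=> t t01.
by rewrite !subr0; exact: ray.
Qed.

Variables (x d : 'rV[R]_n) (sigma eps : R).
Hypothesis x_r : normv (x - xb) < r.
Hypothesis small_step : normv (x + d - xb) <= eps * normv (x - xb).

Lemma step_norm_facts : eps <= 1 ->
  [/\ normv (x + d - xb) <= normv (x - xb),
      normv (x - xb) <= normv (x + d - xb) + normv d,
      normv (G x) <= l * normv (x - xb) & normv (G (x + d)) <= l * normv (x + d - xb)].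
Proof.
move=> eps_le1.
have Q_le_a : normv (x + d - xb) <= normv (x - xb).
  by apply: le_trans small_step _; rewrite ler_piMl ?normv_ge0.
split=> //.
- have -> : x - xb = (x + d - xb) - d by rewrite addrAC addrK.
  exact: normvB.
- exact: normv_G_le.
- by apply: normv_G_le; exact: le_lt_trans Q_le_a x_r.
Qed.

Lemma armijo_of_gradient_gap c :
  0 <= sigma -> 0 < c -> eps <= 1 -> (l + c) * eps <= c - sigma * l ->
  phi (x + d) - phi x <= dotv (G (x + d)) d - c * normv d ^+ 2 ->
  phi (x + d) <= phi x + sigma * dotv (G x) d.
Proof.
move=> sigma_ge0 c_gt0 eps_le1 eps_small gap.
have [Q_le_a a_le G_x G_xd] := step_norm_facts eps_le1.
have step := small_step.
set a := normv (x - xb) in step Q_le_a a_le G_x *.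
set Q := normv (x + d - xb) in step Q_le_a a_le G_xd *.
set D := normv d in a_le gap *.
have a_ge0 : 0 <= a := normv_ge0 _.
have Q_ge0 : 0 <= Q := normv_ge0 _.
have D_ge0 : 0 <= D := normv_ge0 _.
have G_xd_d : dotv (G (x + d)) d <= l * Q * D.
  exact: le_trans (dotv_le _ _) (ler_wpM2r D_ge0 G_xd).
have G_x_d : - (l * a * D) <= dotv (G x) d.
  have := le_trans (normr_dotv_le (G x) d) (ler_wpM2r D_ge0 G_x).
  by rewrite ler_norml => /andP[].
have slope : l * Q + sigma * l * a <= c * D.
  have : (l + c) * Q <= (c - sigma * l) * a.
    apply: le_trans (ler_wpM2l (addr_ge0 l_ge0 (ltW c_gt0)) step) _.
    by rewrite mulrA ler_wpM2r.
  have : c * (a - Q) <= c * D by rewrite ler_pM2l // lerBlDl.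
  nra.
have := ler_wpM2l sigma_ge0 G_x_d.
have := ler_wpM2l D_ge0 slope.
nra.
Qed.

Lemma armijo_of_descent_direction kappa :
  0 < kappa -> sigma <= 2^-1 -> eps <= 2^-1 -> l * eps <= (2^-1 - sigma) / (8 * kappa) ->
  (forall t, 0 <= t <= 1 -> normv (G (xb + t *: (x - xb)) - t *: G x)
     <= (2^-1 - sigma) / (8 * kappa) * normv (x - xb)) ->
  dotv (G x) d <= - kappa^-1 * normv d ^+ 2 ->
  phi (x + d) <= phi x + sigma * dotv (G x) d.
Proof.
set g := (2^-1 - sigma) / (8 * kappa).
move=> kappa_gt0 sigma_le eps_le l_eps ray descent.
have eps_le1 : eps <= 1 by lra.
have [Q_le_a a_le G_x _] := step_norm_facts eps_le1.
have lower := trapezoid_center_lb x_r ray.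
have upper := lipschitz_center_ub (le_lt_trans Q_le_a x_r).
have step := small_step.
set a := normv (x - xb) in step Q_le_a a_le G_x lower *.
set Q := normv (x + d - xb) in step Q_le_a a_le upper *.
set D := normv d in a_le descent *.
have a_ge0 : 0 <= a := normv_ge0 _.
have Q_ge0 : 0 <= Q := normv_ge0 _.
have dot_q : - (l * a * Q) <= dotv (G x) (x + d - xb).
  have := le_trans (normr_dotv_le (G x) _) (ler_wpM2r Q_ge0 G_x).
  by rewrite ler_norml => /andP[].
have split_d : dotv (G x) d = dotv (G x) (x + d - xb) - dotv (G x) (x - xb).
  by rewrite -dotvBr opprB addrA subrK [x + d]addrC addrK.
have Q_le_half : Q <= a / 2 by have := ler_wpM2r a_ge0 eps_le; lra.
have descent_a : (2^-1 - sigma) * dotv (G x) d <= - (2 * g * a ^+ 2).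
  have D_sqr : a ^+ 2 / 4 <= D ^+ 2.
    have : a / 2 * (a / 2) <= D * D by apply: ler_pM; rewrite ?divr_ge0 //; lra.
    by rewrite !expr2; lra.
  have sigma_ge : 0 <= 2^-1 - sigma by lra.
  have kappaV_ge0 : 0 <= kappa^-1 by rewrite invr_ge0; exact: ltW.
  have := ler_wpM2l sigma_ge descent.
  have := ler_wpM2l sigma_ge (ler_wpM2l kappaV_ge0 D_sqr).
  have -> : 2 * g * a ^+ 2 = (2^-1 - sigma) * (kappa^-1 * (a ^+ 2 / 4)).
    by rewrite /g; field; rewrite gt_eqF.
  lra.
have laQ : l * a * Q <= g * a ^+ 2.
  have := ler_wpM2l (mulr_ge0 l_ge0 a_ge0) step.
  have := ler_wpM2r (sqr_ge0 a) l_eps.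
  rewrite expr2; nra.
have lQQ : l * Q ^+ 2 <= l * a * Q.
  by rewrite expr2 mulrA ler_wpM2r // ler_wpM2l.
rewrite expr2 in descent_a laQ.
nra.
Qed.

End ArmijoStep.

Lemma C1_lipschitz_ball (R : realType) n (phi : 'rV[R]_n -> R) G xb l :
  C1_around phi G xb -> loc_lipschitz G xb l ->
  exists2 r : R, 0 < r & (forall y, normv (y - xb) < r -> has_gradient phi y (G y)) /\
    (forall y z, normv (y - xb) < r -> normv (z - xb) < r ->
       normv (G y - G z) <= l * normv (y - z)).
Proof.
move=> [rC [rC_gt0 C1]] [rL [rL_gt0 lipG]].
exists (Num.min rC rL); first by rewrite lt_min rC_gt0.
split=> [y | y z].
- by rewrite lt_min => /andP[yC _]; exact: (C1 y yC).1.
- by rewrite !lt_min => /andP[_ yL] /andP[_ zL]; exact: lipG.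
Qed.

Theorem proposition4p4 (R : realType) (n : nat) (phi : 'rV[R]_n -> R)
  (G : 'rV[R]_n -> 'rV[R]_n) (xb : 'rV[R]_n) (l : R)
  (x d : nat -> 'rV[R]_n) (sigma : R) :
  C1_around phi G xb ->
  G xb = 0 ->
  0 < l ->
  loc_lipschitz G xb l ->
  semismooth_star G xb (G xb) ->
  vseq_cvg x xb ->
  (forall k, x k != xb) ->
  (forall eps : R, 0 < eps -> eventually_nat (fun k =>
     normv (x k + d k - xb) <= eps * normv (x k - xb))) ->
  ((dir_differentiable G xb /\
     (exists kappa : R, 0 < kappa /\ eventually_nat (fun k =>
        dotv (G (x k)) (d k) <= - kappa^-1 * normv (d k) ^+ 2)) /\
     0 < sigma /\ sigma < 2^-1)
   \/
   (exists kappa : R, 0 < kappa /\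
     eventually_nat (fun k =>
        phi (x k + d k) - phi (x k)
          <= dotv (G (x k + d k)) (d k) - (2 * kappa)^-1 * normv (d k) ^+ 2) /\
     0 < sigma /\ sigma < (2 * l * kappa)^-1)) ->
  eventually_nat (fun k =>
    phi (x k + d k) <= phi (x k) + sigma * dotv (G (x k)) (d k)).
Proof.
(* Neither the semismoothness* of G nor [x k != xb] is needed: in case (i),
   directional differentiability and the Lipschitz bound already control G
   along rays, and steps with [x k = xb] are trivial since then [d k = 0]. *)
move=> C1 G_xb l_gt0 lip _ xcv _ small_step cases.
have [r r_gt0 [gradG lipG]] := C1_lipschitz_ball C1 lip.
have x_near := xcv r r_gt0.
case: cases => [[dirG [[kappa [kappa_gt0 descent]] [sigma_gt0 sigma_lt]]]
               | [kappa [kappa_gt0 [gap [sigma_gt0 sigma_lt]]]]].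
- set g := (2^-1 - sigma) / (8 * kappa).
  have g_gt0 : 0 < g by rewrite divr_gt0 ?subr_gt0 // mulr_gt0.
  have half_gt0 : 0 < 2^-1 :> R by rewrite invr_gt0.
  have [eps [eps_gt0 eps_le l_eps]] := exists_small_pos l_gt0 g_gt0 half_gt0.
  have ray := eventually_ray_interpolation (ltW l_gt0) lip dirG xcv g_gt0.
  have [N HN] := eventually_natI descent (eventually_natI (small_step eps eps_gt0)
    (eventually_natI x_near ray)).
  exists N => k /HN [descent_k [step_k [x_k ray_k]]].
  apply: (armijo_of_descent_direction G_xb (ltW l_gt0) lipG gradG x_k step_k
    (kappa := kappa)) => // [|t t01]; first lra.
  by have := ray_k t t01; rewrite G_xb !subr0.
- set c := (2 * kappa)^-1.
  have c_gt0 : 0 < c by rewrite invr_gt0 mulr_gt0.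
  have gap_gt0 : 0 < c - sigma * l.
    rewrite subr_gt0 (_ : c = (2 * l * kappa)^-1 * l); first by rewrite ltr_pM2r.
    by rewrite /c; field; rewrite ?gt_eqF.
  have [eps [eps_gt0 eps_le1 l_eps]] :=
    exists_small_pos (addr_gt0 l_gt0 c_gt0) gap_gt0 ltr01.
  have [N HN] := eventually_natI gap (eventually_natI (small_step eps eps_gt0) x_near).
  exists N => k /HN [gap_k [step_k x_k]].
  exact: (armijo_of_gradient_gap G_xb (ltW l_gt0) lipG x_k step_k
    (ltW sigma_gt0) c_gt0 eps_le1 l_eps gap_k).
Qed.
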